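(* Let $\mathbf a=(a_1,\dots,a_k)$ be a sequence of nonnegative integers and $1\le \ell\le k$. There is a bijection between $D(a_1,\dots,a_k)$ and $\hat D_\ell(a_1,\dots,a_{\ell-1},a_\ell+1,a_{\ell+1},\dots,a_k)$.
   Context: For $\mathbf a=(a_1,\dots,a_k)$ with nonnegative integer entries summing to $n$, put $c_0=0$, $c_j=a_1+\dots+a_j$, and let the $j$-th block be $A_j=\{c_{j-1}+1,\dots,c_j\}$. Let $S_{\mathbf a}\subseteq S_n$ be the set of permutations $\pi$ of $[n]$ with $\pi_i>\pi_{i+1}$ whenever $i,i+1$ lie in the same block. A fixed point is an $i$ with $\pi_i=i$. $D(\mathbf a)$ is the set of derangements in $S_{\mathbf a}$, and $\hat D_\ell(\mathbf a)$ is the set of permutations in $S_{\mathbf a}$ that have a fixed point in $A_\ell$ but no fixed point in any other block. *)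

From mathcomp Require Import all_boot all_fingroup.
Set Implicit Arguments. Unset Strict Implicit. Unset Printing Implicit Defensive.

(* Positions of [n] are represented by ordinals i : 'I_n, position i <-> i+1.
   Blocks are indexed 1..size a:  A_j = {c_{j-1}+1, ..., c_j} with
   c_j = a_1 + ... + a_j. *)
Definition pref (a : seq nat) (j : nat) : nat := sumn (take j a).

Definition in_block (a : seq nat) (j p : nat) : bool :=
  (0 < j <= size a) && (pref a j.-1 < p <= pref a j).

Definition descents_ok (a : seq nat) (s : 'S_(sumn a)) : bool :=
  [forall i : 'I_(sumn a), forall i' : 'I_(sumn a),
     ((i' == i.+1 :> nat) &&
      [exists j : 'I_(size a).+1, in_block a j i.+1 && in_block a j i'.+1])
     ==> (s i' < s i)].

Definition Sa (a : seq nat) : {set 'S_(sumn a)} := [set s | descents_ok s].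

Definition D (a : seq nat) : {set 'S_(sumn a)} :=
  [set s in Sa a | [forall i, s i != i]].

Definition Dhat (l : nat) (a : seq nat) : {set 'S_(sumn a)} :=
  [set s in Sa a | [exists i, (s i == i) && in_block a l i.+1]
                && [forall i, (s i == i) ==> in_block a l i.+1]].

Definition incr_at (a : seq nat) (l : nat) : seq nat :=
  set_nth 0 a l.-1 (nth 0 a l.-1).+1.

From mathcomp Require Import all_boot all_fingroup zify.
Set Implicit Arguments. Unset Strict Implicit. Unset Printing Implicit Defensive.

(* Inside a block a permutation of S_a drops by at least one at each step, so
   i |-> pi_i - i decreases strictly along the block: its excedances (i < pi_i)
   form an initial segment of the block, and it has at most one fixed point there.
   A derangement t in D(a) is mapped to the permutation of [n+1] obtained by
   inserting a new fixed point p into block l just after the excedances of t in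
   that block, relabelling the other positions and values by the lift that skips
   p.  Descents survive because on both sides of p the values were already above,
   resp. below, p.  Conversely a permutation in \hat D_l(a') has a unique fixed point,
   and deleting it gives back a derangement whose excedances in block l end at
   that fixed point. *)

Section Blocks.
Variable a : seq nat.

Lemma pref_size : pref a (size a) = sumn a.
Proof. by rewrite /pref take_size. Qed.

Lemma pref_le j k : j <= k -> pref a j <= pref a k.
Proof.
move=> le_jk; rewrite /pref -(cat_take_drop j (take k a)) sumn_cat take_takel //.
exact: leq_addr.
Qed.

(* [boundary m]: m is one of the partial sums c_j, i.e. the 1-based positions
   m and m+1 lie in different blocks. *)
Definition boundary (m : nat) : bool :=
  m \in [seq pref a j | j <- iota 0 (size a).+1].

Lemma boundaryP m : reflect (exists2 j, j <= size a & pref a j = m) (boundary m).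
Proof.
apply: (iffP mapP) => [[j] | [j le_j <-]]; last by exists j; rewrite ?mem_iota.
by rewrite mem_iota add0n ltnS => le_j ->; exists j.
Qed.

Lemma boundary_pref j : j <= size a -> boundary (pref a j).
Proof. by move=> le_j; apply/boundaryP; exists j. Qed.

Lemma boundary_inside k m : pref a k < m < pref a k.+1 -> ~~ boundary m.
Proof.
move=> /andP[lt_km lt_mk]; apply/boundaryP => -[j _ def_m].
case: (leqP j k) => [/pref_le | /pref_le]; lia.
Qed.

Lemma same_blockE i : i.+1 < sumn a ->
  [exists j : 'I_(size a).+1, in_block a j i.+1 && in_block a j i.+2]
    = ~~ boundary i.+1.
Proof.
move=> lt_i; apply/existsP/idP => [[j] | not_bd].
  rewrite /in_block => /andP[/andP[/andP[j_gt0 _] in_j] /andP[_ in_j']].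
  by apply: (@boundary_inside j.-1); rewrite prednK //; lia.
have [j lt_ij min_j] : exists2 j, i.+1 < pref a j & forall j', i.+1 < pref a j' -> j <= j'.
  have ex_j : exists j, i.+1 < pref a j by exists (size a); rewrite pref_size.
  by case: (ex_minnP ex_j) => j; exists j.
have le_j : j <= size a by apply: min_j; rewrite pref_size.
have j_gt0 : 0 < j by case: j lt_ij {min_j le_j} => //; rewrite /pref take0.
have le_prev : pref a j.-1 <= i.+1 by rewrite leqNgt; apply/negP => /min_j; lia.
have ne_prev : pref a j.-1 != i.+1.
  by apply: contraNneq not_bd => <-; apply: boundary_pref; lia.
exists (Ordinal (le_j : j < (size a).+1)); rewrite /in_block /=.
rewrite j_gt0 le_j /=; lia.
Qed.

End Blocks.

(* Positions are 0-based: [c j] says that [j - 1] and [j] are in different blocks. *)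
Definition descending (c : pred nat) {N} (s : 'S_N) : bool :=
  [forall i : 'I_N, forall j : 'I_N, (j == i.+1 :> nat) && ~~ c j ==> (s j < s i)].

Lemma descendingP (c : pred nat) N (s : 'S_N) :
  reflect (forall i j : 'I_N, j = i.+1 :> nat -> ~~ c j -> s j < s i)
          (descending c s).
Proof.
apply: (iffP forallP) => [desc_s i j def_j not_c | desc_s i].
  by move: (desc_s i) => /forallP/(_ j)/implyP; apply; rewrite not_c def_j eqxx.
by apply/forallP => j; apply/implyP => /andP[/eqP]; apply: desc_s.
Qed.

Lemma SaE a (s : 'S_(sumn a)) : (s \in Sa a) = descending (boundary a) s.
Proof.
rewrite inE; apply/forallP/forallP => desc_s i; apply/forallP => j;
  have := forallP (desc_s i) j; case: (eqVneq (j : nat) i.+1) => //= def_j;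
  by rewrite def_j same_blockE // -def_j.
Qed.

Definition fixpoints_in (X : pred nat) N (s : 'S_N) : bool :=
  [exists i, (s i == i) && X i] && [forall i, (s i == i) ==> X i].

Lemma DE a (t : 'S_(sumn a)) :
  (t \in D a) = descending (boundary a) t && [forall i, t i != i].
Proof. by rewrite inE SaE. Qed.

Lemma DhatE l b (s : 'S_(sumn b)) :
  (s \in Dhat l b) =
  descending (boundary b) s && fixpoints_in (fun i => in_block b l i.+1) s.
Proof. by rewrite inE SaE. Qed.

Section IncrAt.
Variables (a : seq nat) (k : nat).
Hypothesis lt_k : k < size a.
Local Notation b := (incr_at a k.+1).

Lemma size_incr_at : size b = size a.
Proof. by rewrite size_set_nth; apply/maxn_idPr. Qed.

Lemma pref_incr_at j : pref b j = pref a j + (k < j).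
Proof.
rewrite /pref /incr_at /=; elim: a k j lt_k => [|x s IHs] [|k'] [|j] //= lt_k'.
- lia.
- by rewrite IHs // addnA.
Qed.

Lemma sumn_incr_at : sumn b = (sumn a).+1.
Proof. by rewrite -pref_size size_incr_at pref_incr_at pref_size lt_k addn1. Qed.

Lemma boundary_incr_at m : boundary b m =
  if m <= pref a k then boundary a m
  else if m <= pref a k.+1 then false else boundary a m.-1.
Proof.
have le_PE := pref_le a (leqnSn k).
have pref_b j : pref b j = pref a j + (k < j) := pref_incr_at j.
case: ifP => [le_mP | lt_Pm]; last case: ifP => [le_mE | lt_Em].
- apply/boundaryP/boundaryP; rewrite size_incr_at => -[j le_j def_m].
    exists j => //; move: def_m; rewrite pref_b.
    by case: (ltnP k j) => [/(pref_le a) | _]; lia.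
  exists (minn j k); first by rewrite geq_min le_j.
  rewrite pref_b; case: (leqP j k) => [le_jk | /ltnW/(pref_le a) le_kj].
    by rewrite ltnNge le_jk addn0.
  by rewrite ltnn; lia.
- apply/boundaryP => -[j _]; rewrite pref_b.
  by case: (ltnP k j) => [/(pref_le a) | /(pref_le a)]; lia.
- apply/boundaryP/boundaryP; rewrite size_incr_at => -[j le_j def_m].
    exists j => //; move: def_m; rewrite pref_b.
    by case: (ltnP k j) => [_ | /(pref_le a)]; lia.
  exists (maxn j k.+1); first by rewrite geq_max le_j.
  rewrite pref_b; case: (leqP j k) => [le_jk | lt_kj].
    by rewrite (maxn_idPr (leqW le_jk)) ltnSn; have := pref_le a le_jk; lia.
  by rewrite (maxn_idPl lt_kj) lt_kj; lia.
Qed.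

Lemma in_block_incr_at x : in_block b k.+1 x.+1 = (pref a k <= x <= pref a k.+1).
Proof.
by rewrite /in_block size_incr_at !pref_incr_at /= lt_k ltnn ltnSn addn0 addn1 ltnS.
Qed.

End IncrAt.

Lemma card_ord_interval n lo hi : hi <= n -> #|[set i : 'I_n | lo <= i < hi]| = hi - lo.
Proof.
move=> le_hi; rewrite cardsE cardE /enum_mem size_filter /=.
rewrite -(count_map val (fun i => lo <= i < hi)) -enumT val_enum_ord.
suff -> : forall m, count (fun i => lo <= i < hi) (iota 0 m) = minn m hi - lo by lia.
by elim=> [|m IHm]; rewrite ?min0n // -addn1 iotaD count_cat IHm /=; lia.
Qed.

Lemma initial_segment n (X : {set 'I_n}) lo hi : hi <= n ->
  (forall x : 'I_n, x \in X -> lo <= x < hi) ->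
  (forall x y : 'I_n, lo <= x <= y -> y \in X -> x \in X) ->
  X = [set x : 'I_n | lo <= x < lo + #|X|].
Proof.
move=> le_hi X_sub X_closed; apply/setP => x; rewrite inE.
case: (boolP (x \in X)) => [Xx | nXx].
  have /andP[le_lo_x _] := X_sub x Xx.
  have /subset_leq_card : [set y : 'I_n | lo <= y < x.+1] \subset X.
    apply/subsetP => y; rewrite inE ltnS => /andP[le_lo_y le_yx].
    by apply: X_closed Xx; lia.
  (* [lia] does not take [#|X|] as an atom, hence the generalization. *)
  by rewrite card_ord_interval //; move: #|X| => m; lia.
apply/esym/negbTE/andP => -[le_lo_x lt_x].
have /subset_leq_card : X \subset [set y : 'I_n | lo <= y < x].
  apply/subsetP => y Xy; rewrite inE; have /andP[-> lt_y_hi] := X_sub y Xy.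
  by rewrite ltnNge /=; apply: contra nXx => le_xy; apply: (X_closed x y _ Xy); lia.
by rewrite card_ord_interval; [move: #|X| lt_x => m; lia | apply: ltnW].
Qed.

Section Runs.
Variables (c : pred nat) (N : nat) (s : 'S_N) (lo hi : nat).
Hypotheses (desc_s : descending c s) (run : forall m, lo < m < hi -> ~~ c m).

Lemma descending_run (i j : 'I_N) : lo <= i <= j -> j < hi -> s j + (j - i) <= s i.
Proof.
move: desc_s => /descendingP desc_s' /andP[le_lo_i le_ij].
have [d def_j] : exists d, j = i + d :> nat by exists (j - i); lia.
rewrite def_j addKn; elim: d j def_j {le_ij} => [|d IHd] j def_j lt_hi.
  by rewrite addn0 (_ : j = i) //; apply: val_inj; rewrite /= def_j addn0.
have lt_jN : i + d < N by have := ltn_ord j; lia.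
have le_prev : s (Ordinal lt_jN) + d <= s i by apply: IHd => //=; lia.
have lt_prev : s j < s (Ordinal lt_jN).
  by apply: desc_s'; [rewrite def_j addnS | apply: run; lia].
lia.
Qed.

Definition excedances : {set 'I_N} := [set x : 'I_N | lo <= x < hi & x < s x].

Lemma excedancesE : hi <= N ->
  excedances = [set x : 'I_N | lo <= x < lo + #|excedances|].
Proof.
move=> le_hi; apply: initial_segment le_hi _ _ => [x | x y le_xy].
  by rewrite inE => /andP[].
rewrite !inE => /andP[/andP[_ lt_y_hi] lt_y_sy].
have := descending_run le_xy lt_y_hi; lia.
Qed.

Lemma run_fixpoint (p x : 'I_N) : lo <= p < hi -> lo <= x < hi -> s p = p ->
  (x < s x) = (x < p) /\ (s x < x) = (p < x).
Proof.
move=> /andP[le_lo_p lt_p_hi] /andP[le_lo_x lt_x_hi] sp.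
have sp_nat : s p = p :> nat by rewrite sp.
case: (ltngtP x p) => [lt_xp | lt_px | /val_inj ->]; last by rewrite sp ltnn.
  by have /descending_run/(_ lt_p_hi) : lo <= x <= p; lia.
by have /descending_run/(_ lt_x_hi) : lo <= p <= x; lia.
Qed.

End Runs.

Section UnliftPerm.
Variables (n : nat) (i : 'I_n.+1) (s : 'S_n.+1).

(* The default [k] is never used, as [s (lift i k) != s i]. *)
Definition unlift_perm_fun (k : 'I_n) : 'I_n := odflt k (unlift (s i) (s (lift i k))).

Lemma lift_unlift_perm_fun k : lift (s i) (unlift_perm_fun k) = s (lift i k).
Proof.
rewrite /unlift_perm_fun; have := neq_lift i k.
by rewrite -(can_eq (permK s)) => /unlift_some[j -> ->].
Qed.

Lemma unlift_perm_fun_inj : injective unlift_perm_fun.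
Proof.
move=> k1 k2 /(congr1 (lift (s i))); rewrite !lift_unlift_perm_fun.
by move/perm_inj/lift_inj.
Qed.

Definition unlift_perm : 'S_n := perm unlift_perm_fun_inj.

Lemma lift_perm_unlift : lift_perm i (s i) unlift_perm = s.
Proof.
apply/permP => x; case: (unliftP i x) => [k|] ->; first last.
  by rewrite lift_perm_id.
by rewrite lift_perm_lift permE lift_unlift_perm_fun.
Qed.

End UnliftPerm.

Lemma unlift_perm_lift n (i j : 'I_n.+1) (t : 'S_n) : unlift_perm i (lift_perm i j t) = t.
Proof.
apply/permP => k; apply: (@lift_inj _ j).
by rewrite permE -{1}(lift_perm_id i j t) lift_unlift_perm_fun lift_perm_lift.
Qed.

Lemma bijective_sub (T1 T2 : finType) (A : {set T1}) (B : {set T2})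
    (f : T1 -> T2) (g : T2 -> T1) :
  {in A, forall x, f x \in B} -> {in B, forall y, g y \in A} ->
  {in A, cancel f g} -> {in B, cancel g f} ->
  exists h : {x | x \in A} -> {y | y \in B}, bijective h.
Proof.
move=> fA gB fK gK.
exists (fun x => Sub (f (val x)) (fA _ (valP x))).
exists (fun y => Sub (g (val y)) (gB _ (valP y))).
  by move=> x; apply: val_inj; apply: fK (valP x).
by move=> y; apply: val_inj; apply: gK (valP y).
Qed.

(* [ord0] is a junk value, returned only when [s] has no fixed point. *)
Definition fixpoint n (s : 'S_n.+1) : 'I_n.+1 := odflt ord0 [pick x | s x == x].

Lemma fixpoint_unique n (s : 'S_n.+1) p :
  s p = p -> (forall x, s x = x -> x = p) -> fixpoint s = p.
Proof.
move=> sp uniq_p; rewrite /fixpoint; case: pickP => [x /eqP /uniq_p -> | none] //=.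
by have := none p; rewrite sp eqxx.
Qed.

Lemma cast_perm_pred (Q : forall N, 'S_N -> bool) m N (e : m = N) (s : 'S_m) :
  Q N (cast_perm e s) = Q m s.
Proof. by case: N / e; rewrite cast_perm_id. Qed.

Lemma ltn_lift n (p : 'I_n.+1) (x y : 'I_n) : (lift p x < lift p y) = (x < y).
Proof. by rewrite /= /bump; lia. Qed.

Lemma lift_perm_fixpoint n (p : 'I_n.+1) (t : 'S_n) :
  [forall x, t x != x] -> forall x, (lift_perm p p t x == x) = (x == p).
Proof.
move=> /forallP der_t x; case: (unliftP p x) => [x'|] ->.
  by rewrite lift_perm_lift (inj_eq (@lift_inj _ p)) (negbTE (der_t x')) lift_eqF.
by rewrite lift_perm_id !eqxx.
Qed.

Definition delete_fixpoint n (s : 'S_n.+1) : 'S_n := unlift_perm (fixpoint s) s.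

Lemma delete_fixpoint_lift_perm n (p : 'I_n.+1) (t : 'S_n) :
  [forall x, t x != x] -> delete_fixpoint (lift_perm p p t) = t.
Proof.
move=> der_t; rewrite /delete_fixpoint (@fixpoint_unique _ _ p) ?lift_perm_id //.
  exact: unlift_perm_lift.
by move=> x /eqP; rewrite lift_perm_fixpoint // => /eqP.
Qed.

Section InsertFixpoint.
Variables (a : seq nat) (k : nat).
Hypothesis lt_k : k < size a.
Local Notation n := (sumn a).
Local Notation b := (incr_at a k.+1).
Local Notation P := (pref a k).
Local Notation E := (pref a k.+1).

Lemma block_bounds : P <= E <= n.
Proof. by rewrite pref_le //= -pref_size pref_le. Qed.

Lemma boundary_lift (p : 'I_n.+1) m : P <= p <= E -> m != p :> nat ->
  boundary b (bump p m) = boundary a m.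
Proof.
move=> le_p ne_mp; rewrite boundary_incr_at //.
have [lt_mp | lt_pm] : m < p \/ p < m by lia.
  rewrite /bump [p <= m]leqNgt lt_mp add0n; case: ifP => // lt_Pm.
  by rewrite ifT; [rewrite (negbTE (@boundary_inside a k m _)) | ]; lia.
rewrite /bump (ltnW lt_pm) add1n ifN; last by lia.
by case: ifP => // le_mE; rewrite (negbTE (@boundary_inside a k m _)) //; lia.
Qed.

Lemma boundary_new_block m : P < m < E.+1 -> ~~ boundary b m.
Proof. by move=> in_m; rewrite boundary_incr_at // ifN ?ifT //; lia. Qed.

Definition excedance_threshold (t : 'S_n) (p : nat) :=
  forall x : 'I_n, P <= x < E -> (x < t x) = (x < p).

Definition ins_pos (t : 'S_n) : 'I_n.+1 := inord (P + #|excedances t P E|).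

Lemma ins_pos_spec t : descending (boundary a) t ->
  P <= ins_pos t <= E /\ excedance_threshold t (ins_pos t).
Proof.
move=> desc_t; have /andP[le_PE le_En] := block_bounds.
have exc_le : #|excedances t P E| <= E - P.
  rewrite -(@card_ord_interval n P E) //; apply/subset_leq_card/subsetP => x.
  by rewrite !inE => /andP[].
have pos_val : ins_pos t = P + #|excedances t P E| :> nat.
  by rewrite inordK //; lia.
split; first by rewrite pos_val; lia.
move=> x in_x; rewrite pos_val.
have /setP/(_ x) := excedancesE desc_t (@boundary_inside a k) le_En.
by rewrite /excedances !inE in_x; case/andP: in_x => ->.
Qed.

Lemma ins_pos_unique t (p : 'I_n.+1) : P <= p <= E -> excedance_threshold t p ->
  ins_pos t = p.
Proof.
move=> /andP[le_Pp le_pE] thr_p; have le_En := block_bounds.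
rewrite /ins_pos (_ : excedances t P E = [set x : 'I_n | P <= x < p]); last first.
  apply/setP => x; rewrite !inE; case: (boolP (P <= x < E)) => [in_x | out_x].
    by rewrite thr_p // andb_idl //; lia.
  by symmetry; apply/negbTE; apply: contra out_x; lia.
apply: val_inj; rewrite /= card_ord_interval; last by lia.
by rewrite subnKC // inordK.
Qed.

Lemma descending_lift_perm (p : 'I_n.+1) (t : 'S_n) :
  P <= p <= E -> excedance_threshold t p -> [forall x, t x != x] ->
  descending (boundary b) (lift_perm p p t) = descending (boundary a) t.
Proof.
move=> le_p thr /forallP der_t.
have der_nat x : t x != x :> nat by have := der_t x; rewrite val_eqE.
have bd_P : boundary a P := boundary_pref (ltnW lt_k).
have bd_E : boundary a E := boundary_pref lt_k.
have bd_bP : boundary b P by rewrite boundary_incr_at // leqnn.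
have bd_bE : boundary b E.+1 by rewrite boundary_incr_at // !ifN //; lia.
apply/descendingP/descendingP => desc i j def_j not_bd.
  case: (eqVneq (j : nat) p) => [j_p | j_ne_p].
    have j_ne_P : j != P :> nat by apply: contraNneq not_bd => ->.
    have j_ne_E : j != E :> nat by apply: contraNneq not_bd => ->.
    have := thr i; have := thr j; have := der_nat j; lia.
  have := desc (lift p i) (lift p j); rewrite !lift_perm_lift ltn_lift; apply.
    by rewrite /= /bump; lia.
  by rewrite boundary_lift.
case: (unliftP p i) => [i'|] def_i; case: (unliftP p j) => [j'|] def_j'; subst i j.
- rewrite !lift_perm_lift ltn_lift; apply: desc.
    by move: def_j; rewrite /= /bump; lia.
  by rewrite -(@boundary_lift p j') //; move: def_j; rewrite /= /bump; lia.
- have p_ne_P : p != P :> nat by apply: contraNneq not_bd => ->.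
  rewrite lift_perm_id lift_perm_lift /= /bump; have := thr i'.
  by move: def_j; rewrite /= /bump; lia.
- have p_ne_E : p != E :> nat by apply: contraNneq not_bd => p_E; rewrite def_j p_E.
  move: def_j; rewrite lift_perm_id lift_perm_lift /= /bump => def_j.
  have := thr j'; have := der_nat j'; lia.
- by move: def_j; lia.
Qed.

Local Notation in_new_block := (fun i => in_block b k.+1 i.+1).

Definition insert_fixpoint (t : 'S_n) : 'S_n.+1 := lift_perm (ins_pos t) (ins_pos t) t.

Lemma insert_fixpoint_spec t : descending (boundary a) t -> [forall x, t x != x] ->
  descending (boundary b) (insert_fixpoint t) &&
  fixpoints_in in_new_block (insert_fixpoint t).
Proof.
move=> desc_t der_t; have [le_p thr] := ins_pos_spec desc_t.
rewrite /insert_fixpoint descending_lift_perm // desc_t /fixpoints_in /=.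
have fix_s := lift_perm_fixpoint (ins_pos t) der_t.
apply/andP; split.
  by apply/existsP; exists (ins_pos t); rewrite fix_s eqxx in_block_incr_at.
by apply/forallP => x; rewrite fix_s; apply/implyP => /eqP ->; rewrite in_block_incr_at.
Qed.

Lemma delete_fixpoint_spec s :
  descending (boundary b) s -> fixpoints_in in_new_block s ->
  [/\ insert_fixpoint (delete_fixpoint s) = s,
      descending (boundary a) (delete_fixpoint s)
    & [forall x, delete_fixpoint s x != x]].
Proof.
move=> desc_s /andP[/existsP[p /andP[/eqP s_p in_p]] /forallP fix_in].
have {}in_p : P <= p < E.+1 by rewrite ltnS -in_block_incr_at.
have run_s x := run_fixpoint desc_s (@boundary_new_block) (x := x) in_p.
have uniq_p x : s x = x -> x = p.
  move=> s_x; have /run_s/(_ s_p)[] : P <= x < E.+1.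
    by move: (implyP (fix_in x)); rewrite s_x eqxx in_block_incr_at // ltnS; apply.
  by rewrite s_x ltnn => /esym/negbT x_ge /esym/negbT x_le; apply: ord_inj; lia.
rewrite /delete_fixpoint (fixpoint_unique s_p uniq_p); set t := unlift_perm p s.
have lift_t : lift_perm p p t = s by rewrite -[in X in lift_perm _ X]s_p lift_perm_unlift.
have der_t : [forall x, t x != x].
  apply/forallP => x; apply/eqP => t_x; have := lift_perm_lift p p t x.
  by rewrite lift_t t_x => /uniq_p/eqP; rewrite lift_eqF.
have thr : excedance_threshold t p.
  move=> x in_x; have in_lx : P <= lift p x < E.+1 by rewrite /= /bump; lia.
  have [exc _] := run_s _ in_lx s_p.
  by rewrite -lift_t lift_perm_lift ltn_lift in exc; rewrite exc /= /bump; lia.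
split => //; last by rewrite -(descending_lift_perm _ thr der_t) ?lift_t.
by rewrite /insert_fixpoint (ins_pos_unique _ thr) ?lift_t.
Qed.

End InsertFixpoint.

Unset Implicit Arguments.

Theorem mainTheorem10 (a : seq nat) (l : nat) :
  (1 <= l <= size a)%N ->
  exists f : {s : 'S_(sumn a) | s \in D a} ->
             {s : 'S_(sumn (incr_at a l)) | s \in Dhat l (incr_at a l)},
    bijective f.
Proof.
case: l => [|k] //= lt_k; set b := incr_at a k.+1.
have eN : (sumn a).+1 = sumn b by rewrite sumn_incr_at.
have Dhat_cast s : (s \in Dhat k.+1 b) =
    descending (boundary b) (cast_perm (esym eN) s) &&
    fixpoints_in (fun i => in_block b k.+1 i.+1) (cast_perm (esym eN) s).
  by rewrite DhatE (cast_perm_pred (fun N s => descending _ s && fixpoints_in _ s)).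
apply: (bijective_sub (f := fun t => cast_perm eN (insert_fixpoint k t))
                      (g := fun s => delete_fixpoint (cast_perm (esym eN) s))).
- by move=> t; rewrite DE Dhat_cast cast_permK => /andP[]; apply: insert_fixpoint_spec.
- move=> s; rewrite DE Dhat_cast => /andP[desc_s fix_s].
  by have [_ -> ->] := delete_fixpoint_spec lt_k desc_s fix_s.
- by move=> t; rewrite DE cast_permK => /andP[_]; apply: delete_fixpoint_lift_perm.
- move=> s; rewrite Dhat_cast => /andP[desc_s fix_s].
  by have [-> _ _] := delete_fixpoint_spec lt_k desc_s fix_s; rewrite cast_permKV.
Qed.
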